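(* Let $s\ge 2$, $n=2s-1$, and let $A_1A_2\dots A_n$ be a polygon whose distinct vertices lie on a circle $\Gamma$, with vertex indices taken modulo $n$. For each $i\in\{1,\dots,n\}$, let $d_i$ be a line through $A_i$ meeting the line of the opposite side $A_{i+s-1}A_{i+s}$ in a single point $M_i\notin\{A_{i+s-1},A_{i+s}\}$, and let $M'_i$ be the second intersection point of $d_i$ with $\Gamma$. Then $$\prod_{i=1}^{n}\frac{|M_iA_{i+s-1}|}{|M_iA_{i+s}|}=\prod_{i=1}^{n}\frac{|M'_iA_{i+s-1}|}{|M'_iA_{i+s}|}.$$
   Context: $|XY|$ denotes the Euclidean distance between points $X$ and $Y$. *)

From HB Require Import structures.
From mathcomp Require Import all_boot all_order all_algebra.
From mathcomp Require Import reals.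
Set Implicit Arguments. Unset Strict Implicit. Unset Printing Implicit Defensive.
Import Order.TTheory GRing.Theory Num.Theory.
Local Open Scope ring_scope.

Definition pt (R : realType) := (R * R)%type.

Section Geo.
Variable R : realType.

Definition dist (P Q : pt R) : R :=
  Num.sqrt ((P.1 - Q.1) ^+ 2 + (P.2 - Q.2) ^+ 2).

Definition on_circle (c : pt R) (r : R) (P : pt R) : Prop := dist P c = r.

Definition on_line_dir (P v X : pt R) : Prop :=
  exists t : R, X = (P.1 + t * v.1, P.2 + t * v.2).

Definition on_line2 (P Q X : pt R) : Prop := on_line_dir P (Q.1 - P.1, Q.2 - P.2) X.
End Geo.

From HB Require Import structures.
From mathcomp Require Import all_boot all_order all_algebra.
From mathcomp Require Import reals.
From mathcomp Require Import ring zify.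
Import Order.TTheory GRing.Theory Num.Theory.
Local Open Scope ring_scope.

(* Let the line d through a point P of the circle meet a line ab (a, b on the
   circle) at M, and the circle again at M'.  As M lies on ab,
   |Ma| / |Mb| = dist(a, d) / dist(b, d); and for X on the circle,
   |XM'| |XP| = 2 r dist(X, d).  Hence
   |Ma| / |Mb| = (|Pa| / |Pb|) (|M'a| / |M'b|).
   For P = A_i and ab the opposite side, the extra factors
   |A_i A_(i+s-1)| / |A_i A_(i+s)| cancel over the polygon: since
   s + (s - 1) = n, the chord A_i A_(i+s) is the chord A_j A_(j+s-1) for
   j = i + s. *)

Section Plane.
Context {R : realType}.
Implicit Types (P Q X a b c v u w z : pt R) (r t : R).

Definition vec P Q : pt R := (Q.1 - P.1, Q.2 - P.2).
Definition sqnorm u : R := u.1 ^+ 2 + u.2 ^+ 2.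
Definition dot u w : R := u.1 * w.1 + u.2 * w.2.
Definition cross u w : R := u.1 * w.2 - u.2 * w.1.
Definition line_point P v t : pt R := (P.1 + t * v.1, P.2 + t * v.2).

Lemma sqnorm_ge0 u : 0 <= sqnorm u.
Proof. by rewrite addr_ge0 ?sqr_ge0. Qed.

Lemma sqnorm_eq0 u : (sqnorm u == 0) = (u == (0, 0)).
Proof. by case: u => x y; rewrite paddr_eq0 ?sqr_ge0 // !sqrf_eq0 xpair_eqE. Qed.

Lemma sqnorm_vec_eq0 P Q : (sqnorm (vec P Q) == 0) = (Q == P).
Proof. by case: P Q => [p1 p2] [q1 q2]; rewrite sqnorm_eq0 !xpair_eqE /= !subr_eq0. Qed.

Lemma dist_vec P Q : dist P Q = Num.sqrt (sqnorm (vec Q P)).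
Proof. by []. Qed.

Lemma dist_neq0 P Q : P <> Q -> dist P Q != 0.
Proof.
move=> /eqP neqPQ.
by rewrite dist_vec sqrtr_eq0 -ltNge lt0r sqnorm_ge0 sqnorm_vec_eq0 neqPQ.
Qed.

Lemma dist_sym P Q : dist P Q = dist Q P.
Proof. by rewrite /dist; congr Num.sqrt; ring. Qed.

Lemma on_circleE c r X : 0 <= r -> on_circle c r X <-> sqnorm (vec c X) = r ^+ 2.
Proof.
move=> r_ge0; rewrite /on_circle dist_vec; split => [<-|->].
  by rewrite sqr_sqrtr // sqnorm_ge0.
by rewrite sqrtr_sqr ger0_norm.
Qed.

Lemma sqnormM_dot_cross u w : sqnorm u * sqnorm w = dot u w ^+ 2 + cross u w ^+ 2.
Proof. by rewrite /sqnorm /dot /cross; ring. Qed.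

Lemma dot_cross_orthogonal z w v :
  dot z w = 0 -> dot z v ^+ 2 * sqnorm w = sqnorm z * cross w v ^+ 2.
Proof.
move=> zw0; apply/eqP; rewrite -subr_eq0; apply/eqP.
have -> : dot z v ^+ 2 * sqnorm w - sqnorm z * cross w v ^+ 2 =
    dot z w * (2 * dot z v * dot w v - dot z w * sqnorm v).
  by rewrite /sqnorm /dot /cross; ring.
by rewrite zw0 mul0r.
Qed.

Lemma line_point0 P v : line_point P v 0 = P.
Proof. by case: P => p1 p2; rewrite /line_point !mul0r !addr0. Qed.

Lemma line_point_eq_base {P v t} : v <> (0, 0) -> line_point P v t = P -> t = 0.
Proof.
case: P v => [p1 p2] [v1 v2] nz_v [/eqP + /eqP].
rewrite -subr_eq0 addrAC subrr add0r mulf_eq0 => /orP[/eqP //|/eqP v1_0].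
rewrite -subr_eq0 addrAC subrr add0r mulf_eq0 => /orP[/eqP //|/eqP v2_0].
by case: nz_v; rewrite v1_0 v2_0.
Qed.

Lemma sqnorm_vec_line_point X P v t :
  sqnorm (vec X (line_point P v t)) =
  sqnorm (vec X P) + t * (t * sqnorm v + 2 * dot (vec X P) v).
Proof. by rewrite /sqnorm /vec /dot /line_point /=; ring. Qed.

Lemma second_intersection_param {c r P v t} :
  0 <= r -> v <> (0, 0) -> on_circle c r P -> on_circle c r (line_point P v t) ->
  (line_point P v t <> P \/
   forall X, on_line_dir P v X -> on_circle c r X -> X = P) ->
  t * sqnorm v = - 2 * dot (vec c P) v.
Proof.
move=> r_ge0 nz_v /(on_circleE _ _ _ r_ge0) onP /(on_circleE _ _ _ r_ge0).
set k := dot (vec c P) v.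
rewrite sqnorm_vec_line_point onP => /eqP; rewrite -subr_eq0 addrAC subrr add0r.
rewrite mulf_eq0 addr_eq0 mulNr => /orP[/eqP t0|/eqP->] //.
(* t = 0: d is tangent, so the other root t' of the quadratic is 0 too. *)
rewrite t0 line_point0 mul0r => -[//|tangent].
pose t' := - 2 * k / sqnorm v.
have t'E : t' * sqnorm v = - 2 * k by rewrite divfK // sqnorm_eq0; apply/eqP.
have : line_point P v t' = P.
  apply: tangent; first by exists t'.
  rewrite (on_circleE _ _ _ r_ge0) sqnorm_vec_line_point onP t'E -/k.
  by rewrite mulNr addNr mulr0 addr0.
by move/(line_point_eq_base nz_v) => t'0; rewrite -mulNr -t'E t'0 mul0r.
Qed.

Lemma on_line2_right a b : on_line2 a b b.
Proof. by exists 1; case: a b => [a1 a2] [b1 b2]; rewrite /= !mul1r !subrKC. Qed.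

(* [cross (vec X P) v] is |v| times the signed distance from X to d.
   With [z = (P - c) + (X - c)] and [w = P - X]: [z] is orthogonal to [w]
   since |P - c| = |X - c|, and |w|^2 + |z|^2 = 4 r^2 by the parallelogram
   law. *)
Lemma chord_product {c r P X v t} :
  sqnorm (vec c P) = r ^+ 2 -> sqnorm (vec c X) = r ^+ 2 ->
  t * sqnorm v = - 2 * dot (vec c P) v ->
  sqnorm (vec X (line_point P v t)) * sqnorm (vec X P) * sqnorm v =
  4 * r ^+ 2 * cross (vec X P) v ^+ 2.
Proof.
move=> onP onX tE; set w := vec X P; set k := dot (vec c P) v.
pose z : pt R := ((vec c P).1 + (vec c X).1, (vec c P).2 + (vec c X).2).
have zw0 : dot z w = 0.
  have -> : dot z w = sqnorm (vec c P) - sqnorm (vec c X).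
    by rewrite /dot /sqnorm /=; ring.
  by rewrite onP onX subrr.
have parallelogram : sqnorm w + sqnorm z = 4 * r ^+ 2.
  have -> : sqnorm w + sqnorm z = 2 * sqnorm (vec c P) + 2 * sqnorm (vec c X).
    by rewrite /sqnorm /=; ring.
  by rewrite onP onX; ring.
have dot_zv : - dot z v = dot w v - 2 * k by rewrite /k /dot /=; ring.
have expand : sqnorm (vec X (line_point P v t)) * sqnorm v =
              cross w v ^+ 2 + dot z v ^+ 2.
  rewrite sqnorm_vec_line_point -/w -[dot z v]opprK sqrrN dot_zv.
  transitivity (sqnorm w * sqnorm v + t * sqnorm v * (t * sqnorm v + 2 * dot w v)).
    by ring.
  by rewrite tE -/k sqnormM_dot_cross; ring.
rewrite mulrAC expand mulrDl dot_cross_orthogonal // -parallelogram; ring.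
Qed.

Lemma meet_sqratio {P v a b M} :
  on_line_dir P v M -> on_line2 a b M ->
  sqnorm (vec a M) * cross (vec b P) v ^+ 2 =
  sqnorm (vec b M) * cross (vec a P) v ^+ 2.
Proof.
case: P v a b => [p1 p2] [v1 v2] [a1 a2] [b1 b2] [t ->] [w [e1 e2]].
have p1E : p1 = a1 + w * (b1 - a1) - t * v1 by rewrite -e1; ring.
have p2E : p2 = a2 + w * (b2 - a2) - t * v2 by rewrite -e2; ring.
by rewrite /sqnorm /vec /cross /= p1E p2E; ring.
Qed.

Lemma secant_sqratio {c r P a b v M t} :
  sqnorm (vec c P) = r ^+ 2 -> sqnorm (vec c a) = r ^+ 2 ->
  sqnorm (vec c b) = r ^+ 2 -> P <> a -> v <> (0, 0) ->
  on_line_dir P v M -> on_line2 a b M ->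
  t * sqnorm v = - 2 * dot (vec c P) v ->
  let M' := line_point P v t in
  sqnorm (vec a M) * sqnorm (vec b P) * sqnorm (vec b M') =
  sqnorm (vec b M) * sqnorm (vec a P) * sqnorm (vec a M').
Proof.
move=> onP ona onb /eqP neqPa /eqP nz_v onM abM tE M'.
have meet := meet_sqratio onM abM.
have chord_a := chord_product onP ona tE.
have chord_b := chord_product onP onb tE.
move: meet chord_a chord_b; rewrite -/M'.
set Ma := sqnorm (vec a M); set Mb := sqnorm (vec b M).
set Na := sqnorm (vec a M'); set Nb := sqnorm (vec b M').
set Pa := sqnorm (vec a P); set Pb := sqnorm (vec b P).
set Ca := cross (vec a P) v; set Cb := cross (vec b P) v.
move=> meet chord_a chord_b.
have nz_Pa : Pa != 0 by rewrite sqnorm_vec_eq0.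
have nz_V : sqnorm v != 0 by rewrite sqnorm_eq0.
apply: (mulIf (mulf_neq0 nz_Pa nz_V)).
transitivity (Pa * (Ma * (Nb * Pb * sqnorm v))); first by ring.
rewrite chord_b; transitivity (4 * r ^+ 2 * Pa * (Ma * Cb ^+ 2)); first by ring.
rewrite meet; transitivity (Mb * Pa * (4 * r ^+ 2 * Ca ^+ 2)); first by ring.
by rewrite -chord_a; ring.
Qed.

Lemma secant_ratio {c r P a b v M M'} :
  0 <= r -> on_circle c r P -> on_circle c r a -> on_circle c r b ->
  P <> a -> P <> b -> v <> (0, 0) ->
  on_line_dir P v M -> on_line2 a b M ->
  (forall X, on_line_dir P v X -> on_line2 a b X -> X = M) -> M <> b ->
  on_line_dir P v M' -> on_circle c r M' ->
  (M' <> P \/ forall X, on_line_dir P v X -> on_circle c r X -> X = P) ->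
  dist M a / dist M b = dist P a / dist P b * (dist M' a / dist M' b).
Proof.
move=> r_ge0 onP ona onb neqPa neqPb nz_v dM abM uniqM neqMb dM' onM' second.
have neqM'b : M' <> b.
  move=> eqM'b; apply: neqMb; apply/esym/uniqM; last exact: on_line2_right.
  by rewrite -eqM'b.
case: dM' => t eqM'; rewrite -/(line_point P v t) in eqM'; subst M'.
have tE := second_intersection_param r_ge0 nz_v onP onM' second.
move: onP ona onb; rewrite !(on_circleE _ _ _ r_ge0) => onP ona onb.
have sq := secant_sqratio onP ona onb neqPa nz_v dM abM tE.
rewrite mulf_div; apply/eqP; rewrite eqr_div ?mulf_neq0 ?dist_neq0 //.
rewrite !dist_vec -!sqrtrM ?mulr_ge0 ?sqnorm_ge0 //; apply/eqP; congr Num.sqrt.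
by rewrite mulrA sq; ring.
Qed.
End Plane.

Lemma periodic_modn {T : Type} {f : nat -> T} {n : nat} :
  (forall k, f (k + n)%N = f k) -> forall k, f k = f (k %% n)%N.
Proof.
move=> f_per k; rewrite {1}(divn_eq k n); elim: (k %/ n)%N => [|q IHq].
  by rewrite mul0n add0n.
by rewrite mulSn -addnA addnC f_per.
Qed.

Lemma modn_lt2n k n : (k < n + n)%N -> (k %% n)%N = (if k < n then k else k - n)%N.
Proof.
move=> lt_k2n; case: ltnP => [/modn_small //|le_nk].
by rewrite -{1}(subnK le_nk) modnDr modn_small // ltn_subLR.
Qed.

Lemma periodic_inj_neq {T : Type} {A : nat -> T} {n i k : nat} :
  (forall j, A (j + n)%N = A j) ->
  (forall i j, (i < n)%N -> (j < n)%N -> A i = A j -> i = j) ->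
  (i < n)%N -> (k < n + n)%N -> k <> i -> k <> (i + n)%N -> A i <> A k.
Proof.
move=> A_per A_inj lt_in lt_k neq_ki neq_kin eqA.
have n_gt0 : (0 < n)%N by lia.
have eqA_mod : A (k %% n)%N = A i by rewrite -(periodic_modn A_per) eqA.
have := A_inj _ _ (ltn_pmod k n_gt0) lt_in eqA_mod.
by rewrite modn_lt2n //; case: ltnP => ?; lia.
Qed.

Lemma big_shift_periodic {T : Type} {idx : T} (op : Monoid.com_law idx)
    (n : nat) (F : nat -> T) :
  (forall k, F (k + n)%N = F k) ->
  forall m, \big[op/idx]_(i < n) F (i + m)%N = \big[op/idx]_(i < n) F i.
Proof.
case: n => [|n] F_per m; first by rewrite !big_ord0.
elim: m => [|m IHm]; first by apply: eq_bigr => i _; rewrite addn0.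
rewrite -IHm big_ord_recr big_ord_recl /= add0n addnS -addSn addnC F_per Monoid.mulmC.
by congr (op _ _); apply: eq_bigr => i _; rewrite addnS addSn.
Qed.

(* The pair [(i, i + m)] is also the pair [(i + m, i + m + k)] read backwards. *)
Lemma big_sym_periodic_shift {T : Type} {idx : T} (op : Monoid.com_law idx)
    {U : Type} {d : U -> U -> T} {A : nat -> U} {n m k : nat} :
  (forall x y, d x y = d y x) -> (forall j, A (j + n)%N = A j) -> (m + k)%N = n ->
  \big[op/idx]_(i < n) d (A i) (A (i + m)%N) =
  \big[op/idx]_(i < n) d (A i) (A (i + k)%N).
Proof.
move=> dC A_per mk_n.
rewrite -(big_shift_periodic op n (fun j => d (A j) (A (j + k)%N)) _ m); last first.
  by move=> j; rewrite addnAC !A_per.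
by apply: eq_bigr => i _; rewrite -addnA mk_n A_per dC.
Qed.

Theorem mainTheorem5 (R : realType) (s : nat) (hs : (2 <= s)%N)
  (c : pt R) (r : R) (hr : 0 < r)
  (A : nat -> pt R) (v M M' : nat -> pt R) :
  let n := (2 * s - 1)%N in
  (forall k, A (k + n)%N = A k) ->
  (forall i j, (i < n)%N -> (j < n)%N -> A i = A j -> i = j) ->
  (forall i, (i < n)%N -> on_circle c r (A i)) ->
  (forall i, (i < n)%N ->
     v i <> (0, 0) /\
     [/\
         (* M_i is the single intersection point of d_i with line A_{i+s-1}A_{i+s} *)
         on_line_dir (A i) (v i) (M i),
         on_line2 (A (i + s - 1)%N) (A (i + s)%N) (M i),
         (forall X, on_line_dir (A i) (v i) X ->
                    on_line2 (A (i + s - 1)%N) (A (i + s)%N) X -> X = M i),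
         M i <> A (i + s - 1)%N & M i <> A (i + s)%N]) ->
  (forall i, (i < n)%N ->
     [/\ on_line_dir (A i) (v i) (M' i), on_circle c r (M' i) &
         (* second intersection: different from A_i, unless d_i is tangent *)
         (M' i <> A i \/
          forall X, on_line_dir (A i) (v i) X -> on_circle c r X -> X = A i)]) ->
  \prod_(i < n) (dist (M i) (A (i + s - 1)%N) / dist (M i) (A (i + s)%N)) =
  \prod_(i < n) (dist (M' i) (A (i + s - 1)%N) / dist (M' i) (A (i + s)%N)).
Proof.
move=> n A_per A_inj onA_lt HM HM'.
have onA k : on_circle c r (A k).
  by rewrite (periodic_modn A_per); apply/onA_lt/ltn_pmod; rewrite /n; lia.
have [neqA_l neqA_r] : (forall i, i < n -> A i <> A (i + s - 1))%N /\
                       (forall i, i < n -> A i <> A (i + s))%N.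
  split=> i lt_in; apply: (periodic_inj_neq A_per A_inj);
    by rewrite /n in lt_in *; lia.
rewrite (eq_bigr (fun i : 'I_n =>
    dist (A i) (A (i + s - 1)%N) / dist (A i) (A (i + s)%N) *
    (dist (M' i) (A (i + s - 1)%N) / dist (M' i) (A (i + s)%N)))); last first.
  move=> i _; have [nz_v [dM abM uniqM _ neqMb]] := HM i (ltn_ord i).
  have [dM' onM' second] := HM' i (ltn_ord i).
  exact: secant_ratio (ltW hr) (onA _) (onA _) (onA _) (neqA_l _ (ltn_ord i))
    (neqA_r _ (ltn_ord i)) nz_v dM abM uniqM neqMb dM' onM' second.
have opposite_sides : \prod_(i < n) dist (A i) (A (i + s)%N) =
                      \prod_(i < n) dist (A i) (A (i + s - 1)%N).
  rewrite (big_sym_periodic_shift _ dist_sym A_per (_ : s + (s - 1) = n)%N).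
    by apply: eq_bigr => i _; rewrite addnBA // ltnW.
  by rewrite /n; lia.
rewrite big_split /= prodf_div opposite_sides.
rewrite divff ?mul1r //; apply/prodf_neq0 => i _.
exact/dist_neq0/neqA_l/ltn_ord.
Qed.
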